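(* Let $G$ be a finite simple graph with a clique vertex-partition $\Pi=\{W_1,\dots,W_p\}$, and let $t\ge 2$ be an integer. Then (1) $\dim \mathrm{CF}_t(G(\Pi,t)) = p(t-1)-1$, and (2) $\mathrm{CF}_t(G(\Pi,t))$ is pure.
   Context: A clique vertex-partition of $G$ is a collection $\Pi=\{W_1,\dots,W_p\}$ of pairwise disjoint (possibly empty) vertex sets each inducing a clique in $G$, whose union is $V(G)$. The $t$-clique whiskering $G(\Pi,t)$ is obtained from $G$ by adding, for each $1\le i\le p$, $t-1$ new distinct vertices $x_{i,1},\dots,x_{i,t-1}$ (all new vertices distinct from each other and from $V(G)$) and adding edges so that $W_i\cup\{x_{i,1},\dots,x_{i,t-1}\}$ becomes a clique; no other edges are added. $\mathrm{CF}_t(\cdot)$ is the simplicial complex on the vertex set whose faces are the vertex subsets inducing no clique on $t$ vertices. The dimension of a complex is the maximum of $|F|-1$ over faces $F$; a complex is pure if all facets have the same dimension. *)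

From mathcomp Require Import all_boot all_order all_algebra.
Set Implicit Arguments. Unset Strict Implicit. Unset Printing Implicit Defensive.

Section Defs.
Variable T : finType.

Definition simple_graph (e : rel T) : Prop := symmetric e /\ irreflexive e.

Definition is_clique (e : rel T) (S : {set T}) : bool :=
  [forall x in S, forall y in S, (x != y) ==> e x y].

Definition CF_face (t : nat) (e : rel T) (F : {set T}) : bool :=
  ~~ [exists S : {set T}, [&& S \subset F, #|S| == t & is_clique e S]].

Definition cx_dim (face : pred {set T}) : int :=
  ((\max_(F : {set T} | face F) #|F|)%:Z - 1)%R.

Definition cx_facet (face : pred {set T}) (F : {set T}) : bool :=
  maxset face F.

Definition cx_pure (face : pred {set T}) : Prop :=
  forall F1 F2, cx_facet face F1 -> cx_facet face F2 -> #|F1| = #|F2|.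

End Defs.


Section Whisker.
Variables (V : finType) (p t : nat).

(* Clique vertex-partition Pi = {W_1,...,W_p} (blocks possibly empty). *)
Definition clique_vertex_partition (e : rel V) (W : 'I_p -> {set V}) : Prop :=
  [/\ forall i j, i != j -> [disjoint W i & W j],
      forall i, is_clique e (W i) &
      \bigcup_(i < p) W i = [set: V]].

(* Vertex set of G(Pi,t): V plus new vertices x_{i,j}, i < p, j < t-1. *)
Definition whisk_vertex : finType := (V + ('I_p * 'I_t.-1))%type.

Definition whisk_rel (e : rel V) (W : 'I_p -> {set V}) : rel whisk_vertex :=
  fun a b =>
    match a, b with
    | inl u, inl v => e u v
    | inl u, inr (i, _) => u \in W i
    | inr (i, _), inl v => v \in W i
    | inr (i, j), inr (i', j') => (i == i') && (j != j')
    end.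

End Whisker.
Arguments whisk_rel [V p] t e W.
Arguments whisk_vertex V p t : clear implicits.

From mathcomp Require Import all_boot all_order all_algebra.
Set Implicit Arguments. Unset Strict Implicit. Unset Printing Implicit Defensive.

(* The blocks W_i ∪ {x_i1, ..., x_i(t-1)} are cliques partitioning the vertices
   of G(Π,t), and every clique through a whisker x_ij lies in its block.  Hence
   a face meets each block in at most t-1 vertices, so it has at most p(t-1)
   vertices, while the p(t-1) whiskers themselves form a face.  A face meeting
   some block in fewer than t-1 vertices misses a whisker of that block, and
   that whisker can be added to it; so every facet has exactly t-1 vertices in
   every block. *)

Section Cliques.
Variables (T : finType) (r : rel T).

Lemma is_cliqueP (S : {set T}) :
  reflect {in S &, forall x y, x != y -> r x y} (is_clique r S).
Proof.
apply: (iffP forall_inP) => [cl x y xS yS | cl x xS].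
  by move/forall_inP/(_ y yS)/implyP: (cl x xS).
by apply/forall_inP => y yS; apply/implyP; apply: cl.
Qed.

Lemma is_clique_sub (A B : {set T}) :
  A \subset B -> is_clique r B -> is_clique r A.
Proof.
move=> /subsetP AB /is_cliqueP clB; apply/is_cliqueP => x y xA yA.
exact: clB (AB x xA) (AB y yA).
Qed.

Lemma exists_subset_card (A : {set T}) n :
  n <= #|A| -> exists2 S : {set T}, S \subset A & #|S| = n.
Proof.
elim: n => [|n IHn] le_nA; first by exists set0; rewrite ?sub0set ?cards0.
have [S SA cardS] := IHn (ltnW le_nA).
have /card_gt0P [x /setDP [xA xS]] : 0 < #|A :\: S|.
  by rewrite cardsD (setIidPr SA) cardS subn_gt0.
exists (x |: S); first by rewrite subUset sub1set xA SA.
by rewrite cardsU1 xS cardS.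
Qed.

Variable t : nat.

Lemma CF_faceP (F : {set T}) :
  reflect (forall S : {set T}, S \subset F -> is_clique r S -> #|S| != t)
          (CF_face t r F).
Proof.
apply: (iffP existsPn) => [noS S SF clS | noS S].
  by move: (noS S); rewrite SF clS andbT.
by apply/and3P => -[SF /eqP cardS clS]; move: (noS S SF clS); rewrite cardS eqxx.
Qed.

Lemma CF_face_clique (F C : {set T}) :
  CF_face t r F -> is_clique r C -> #|F :&: C| < t.
Proof.
move=> /CF_faceP faceF clC; rewrite ltnNge; apply/negP => /exists_subset_card [S].
rewrite subsetI => /andP [SF SC] cardS.
by move: (faceF S SF (is_clique_sub SC clC)); rewrite cardS eqxx.
Qed.

Lemma CF_face_setU1 (F C : {set T}) a :
    CF_face t r F -> (forall S : {set T}, is_clique r S -> a \in S -> S \subset C) ->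
  #|F :&: C|.+2 <= t -> CF_face t r (a |: F).
Proof.
move=> /CF_faceP faceF clS_C small; apply/CF_faceP => S SaF clS.
have [aS | aNS] := boolP (a \in S); last first.
  apply: faceF clS; apply/subsetP => x xS.
  by have /setU1P [xa | //] := subsetP SaF x xS; rewrite -xa xS in aNS.
have /subset_leq_card : S \subset a |: (F :&: C).
  by rewrite setUIr subsetI SaF (subset_trans (clS_C S clS aS)) ?subsetUr.
rewrite cardsU1 => le_S; rewrite neq_ltn (leq_ltn_trans le_S) //.
by apply: leq_trans small; rewrite !ltnS -add1n leq_add2r leq_b1.
Qed.

End Cliques.

Lemma card_disjoint_cover (I T : finType) (B : I -> {set T}) (F : {set T}) :
    (forall i j, i != j -> [disjoint B i & B j]) -> F \subset \bigcup_i B i ->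
  #|F| = \sum_i #|F :&: B i|.
Proof.
move=> disjB /subsetP coverF.
have {1}-> : F = \bigcup_i (F :&: B i).
  apply/setP => x; apply/idP/bigcupP => [Fx | [i _ /setIP [] //]].
  by have /bigcupP [i _ Bix] := coverF x Fx; exists i; rewrite ?inE ?Fx.
have disjFB i j : i != j -> [disjoint F :&: B i & F :&: B j].
  by move/disjB; apply: disjointW; rewrite subsetIr.
rewrite -sum1_card (partition_disjoint_bigcup _ _ disjFB).
by apply: eq_bigr => i _; rewrite sum1_card.
Qed.

Lemma cx_dim_max (T : finType) (face : pred {set T}) (F0 : {set T}) :
  (forall F, face F -> #|F| <= #|F0|) -> face F0 -> cx_dim face = (#|F0|%:Z - 1)%R.
Proof.
move=> le_F0 faceF0; rewrite /cx_dim; congr (Posz _ - 1)%R.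
by apply/eqP; rewrite eqn_leq (leq_bigmax_cond _ faceF0) andbT; apply/bigmax_leqP.
Qed.

Section Whiskering.
Variables (V : finType) (e : rel V) (p t : nat) (W : 'I_p -> {set V}).
Hypothesis cvpW : clique_vertex_partition e W.

Local Notation X := (whisk_vertex V p t).
Local Notation r := (whisk_rel t e W).

Definition whisk_block (i : 'I_p) : {set X} :=
  [set a | match a with inl v => v \in W i | inr (k, _) => k == i end].

Definition whiskers (i : 'I_p) : {set X} := [set inr (i, j) | j : 'I_t.-1].

Definition new_vertices : {set X} := [set a | if a is inr _ then true else false].

Lemma card_whiskers i : #|whiskers i| = t.-1.
Proof. by rewrite card_imset ?card_ord // => j k [->]. Qed.

Lemma new_verticesI_block i : new_vertices :&: whisk_block i = whiskers i.
Proof.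
apply/setP => -[v | [k j]]; rewrite !inE /=.
  by apply/esym/imsetP => -[].
by apply/eqP/imsetP => [-> | [_ _ [-> _]]]; first exists j.
Qed.

Lemma whisk_block_clique i : is_clique r (whisk_block i).
Proof.
have [_ clW _] := cvpW.
apply/is_cliqueP => -[u | [k j]] [v | [l m]]; rewrite !inE //=.
- by move=> uW vW uv; apply: (is_cliqueP _ _ (clW i)) => //; apply: contraNneq uv => ->.
- by move=> uW /eqP ->.
- by move=> /eqP -> vW.
- by move=> /eqP -> /eqP -> jm; rewrite eqxx; apply: contraNneq jm => ->.
Qed.

Lemma whisk_blocks_disjoint i k :
  i != k -> [disjoint whisk_block i & whisk_block k].
Proof.
have [disjW _ _] := cvpW.
move=> ik; apply/pred0P => -[v | [l j]] /=; rewrite !inE.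
  by case Wiv: (v \in W i); rewrite //= (disjointFr (disjW _ _ ik) Wiv).
by apply/negbTE/andP => -[/eqP li /eqP lk]; rewrite -li lk eqxx in ik.
Qed.

Lemma whisk_blocks_cover : \bigcup_i whisk_block i = [set: X].
Proof.
have [_ _ coverW] := cvpW.
apply/eqP; rewrite eqEsubset subsetT; apply/subsetP => -[v | [i j]] _.
  have /bigcupP [i _ Wiv] : v \in \bigcup_i W i by rewrite coverW inE.
  by apply/bigcupP; exists i; rewrite ?inE.
by apply/bigcupP; exists i; rewrite ?inE.
Qed.

Lemma card_whisk (F : {set X}) : #|F| = \sum_i #|F :&: whisk_block i|.
Proof.
apply: card_disjoint_cover; first exact: whisk_blocks_disjoint.
by rewrite whisk_blocks_cover subsetT.
Qed.

Lemma whisk_clique_sub_block (S : {set X}) i j :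
  is_clique r S -> inr (i, j) \in S -> S \subset whisk_block i.
Proof.
move=> /is_cliqueP clS ijS; apply/subsetP => a aS; rewrite inE.
have [<- // | ij_a] := eqVneq (inr (i, j)) a.
by move: (clS _ _ ijS aS ij_a); case: a {aS ij_a} => [v | [k l] /andP [/eqP ->]].
Qed.

Hypothesis t_gt0 : 0 < t.

Lemma new_vertices_face : CF_face t r new_vertices.
Proof.
apply/CF_faceP => S SN clS; apply/negbT/ltn_eqF.
have [-> // | /card_gt0P [a aS]] := posnP #|S|.
case: a aS (subsetP SN a aS) => [v _ | [i j] ijS _]; first by rewrite inE.
have : S \subset whiskers i.
  by rewrite -new_verticesI_block subsetI SN (whisk_clique_sub_block clS ijS).
move/subset_leq_card; rewrite card_whiskers => le_S.
by rewrite (leq_ltn_trans le_S) ?ltn_predL.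
Qed.

Lemma card_new_vertices : #|new_vertices| = p * t.-1.
Proof.
rewrite card_whisk -[p in p * _]card_ord -sum_nat_const.
by apply: eq_bigr => i _; rewrite new_verticesI_block card_whiskers.
Qed.

Lemma whisk_face_block (F : {set X}) i :
  CF_face t r F -> #|F :&: whisk_block i| <= t.-1.
Proof.
by move/CF_face_clique/(_ (whisk_block_clique i)) => lt_t; rewrite -ltnS prednK.
Qed.

Lemma whisk_face_card (F : {set X}) : CF_face t r F -> #|F| <= p * t.-1.
Proof.
move=> faceF; rewrite card_whisk -[p in p * _]card_ord -sum_nat_const.
by apply: leq_sum => i _; apply: whisk_face_block.
Qed.

Lemma whisk_facet_block (F : {set X}) i :
  cx_facet (CF_face t r) F -> #|F :&: whisk_block i| = t.-1.
Proof.
move=> /maxsetP [faceF maxF]; apply/eqP; rewrite eqn_leq whisk_face_block //=.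
rewrite leqNgt; apply/negP => small.
have /subsetPn [a /imsetP [j _ ->{a}] ijF] : ~~ (whiskers i \subset F).
  apply: contraTN small => /(setSI (whisk_block i))/subset_leq_card.
  rewrite -new_verticesI_block -setIA setIid new_verticesI_block card_whiskers.
  by rewrite -leqNgt.
have ijF' : inr (i, j) |: F = F.
  apply: maxF (subsetUr _ _); apply: CF_face_setU1 faceF _ _.
    by move=> S clS ijS; apply: whisk_clique_sub_block clS ijS.
  by move: small; rewrite -ltnS prednK.
by rewrite -ijF' setU11 in ijF.
Qed.

Lemma whisk_facet_card (F : {set X}) :
  cx_facet (CF_face t r) F -> #|F| = p * t.-1.
Proof.
move=> facetF; rewrite card_whisk -[p in p * _]card_ord -sum_nat_const.
by apply: eq_bigr => i _; apply: whisk_facet_block.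
Qed.

End Whiskering.

Unset Implicit Arguments.

Theorem theorem4p8 (V : finType) (e : rel V) (p : nat) (W : 'I_p -> {set V})
    (t : nat) :
  simple_graph e ->
  clique_vertex_partition e W ->
  2 <= t ->
  cx_dim (CF_face t (whisk_rel t e W)) = ((p * (t - 1))%:Z - 1)%R /\
  cx_pure (CF_face t (whisk_rel t e W)).
Proof.
move=> _ cvpW /ltnW t_gt0; rewrite subn1; split.
  rewrite -(card_new_vertices t cvpW); apply: cx_dim_max; last exact: new_vertices_face.
  by move=> F /(whisk_face_card cvpW t_gt0); rewrite (card_new_vertices t cvpW).
by move=> F1 F2 /(whisk_facet_card cvpW t_gt0) -> /(whisk_facet_card cvpW t_gt0) ->.
Qed.
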